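(* Let $\alpha \in (0, \tfrac{1}{2}\pi)$ and put $\kappa = \sin \alpha$. Then $$\tfrac{1}{2} \pi \,_2F_1 (\tfrac{1}{3}, \tfrac{2}{3}; 1; \kappa^2) = \sqrt2 \int_0^{\alpha} \frac{\cos \frac{1}{3} \psi}{\sqrt{\cos 2 \psi - \cos 2 \alpha}}\, {\rm d} \psi.$$
   Context: $\,_2F_1$ denotes the Gauss hypergeometric function. *)

From Stdlib Require Import Reals Factorial.
From Coquelicot Require Import Coquelicot.
Open Scope R_scope.

Fixpoint pochhammer (a : R) (n : nat) : R :=
  match n with
  | O => 1
  | S m => pochhammer a m * (a + INR m)
  end.

Definition hyp2F1_term (a b c z : R) (n : nat) : R :=
  pochhammer a n * pochhammer b n / (pochhammer c n * INR (fact n)) * z ^ n.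

Definition hyp2F1 (a b c z : R) : R := Series (hyp2F1_term a b c z).

From Stdlib Require Import Reals Lra Lia Factorial.
From Coquelicot Require Import Coquelicot.
Open Scope R_scope.

(* With k = sin alpha, the substitution sin psi = k sin theta turns the integral
   into the integral over [0, pi/2] of F (k sin theta), where
   F x = 2F1(1/3, 2/3; 1/2; x^2) satisfies F (sin psi) cos psi = cos (psi/3):
   by the hypergeometric equation of F, both sides solve y'' = - y/9 with the
   same initial values.  Integrating the power series of F (k sin theta)
   termwise, the Wallis integrals of sin^(2n) contribute (pi/2) (1/2)_n / n!,
   which turns the lower parameter 1/2 into 1. *)

Section BoundedCoefficients.

Variable a : nat -> R.
Hypothesis a_bounded : forall k, Rabs (a k) <= 1.

Lemma Rabs_lt_CV_radius x : Rabs x < 1 -> Rbar_lt (Rabs x) (CV_radius a).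
Proof.
  intros Hx.
  set (r := (1 + Rabs x) / 2).
  assert (Hr : 0 <= r < 1) by (unfold r; pose proof (Rabs_pos x); lra).
  destruct (CV_radius_bounded a) as [Hub _].
  assert (Hle : Rbar_le r (CV_radius a)).
  { apply Hub. exists 1. intros n.
    rewrite Rabs_mult, <- RPow_abs, (Rabs_pos_eq r) by lra.
    pose proof (pow_incr r 1 n ltac:(lra)). rewrite pow1 in *.
    pose proof (a_bounded n). pose proof (pow_le r n (proj1 Hr)). nra. }
  destruct (CV_radius a); simpl in *; auto; unfold r in Hle; lra.
Qed.

Lemma Rabs_PSeries_le r y : Rabs y <= r < 1 -> Rabs (PSeries a y) <= / (1 - r).
Proof.
  intros Hy.
  assert (Hr : 0 <= r) by (pose proof (Rabs_pos y); lra).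
  assert (Hgeom : is_series (fun k => r ^ k) (/ (1 - r)))
    by (apply is_series_geom; rewrite Rabs_pos_eq; lra).
  assert (Hterm : forall k, 0 <= Rabs (a k * y ^ k) <= r ^ k).
  { intros k. split; [apply Rabs_pos|].
    rewrite Rabs_mult, <- RPow_abs.
    pose proof (pow_incr (Rabs y) r k ltac:(split; [apply Rabs_pos | lra])).
    pose proof (pow_le (Rabs y) k (Rabs_pos y)). pose proof (a_bounded k). nra. }
  assert (Habs : ex_series (fun k => Rabs (a k * y ^ k))).
  { apply (@ex_series_le R_AbsRing R_CompleteNormedModule _ (fun k => r ^ k)).
    - intros k. change norm with Rabs. rewrite Rabs_Rabsolu. apply Hterm.
    - eexists; exact Hgeom. }
  unfold PSeries. eapply Rle_trans; [apply Series_Rabs, Habs|].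
  rewrite <- (is_series_unique _ _ Hgeom).
  apply Series_le; [exact Hterm | eexists; exact Hgeom].
Qed.

End BoundedCoefficients.

Lemma PSeries_sub_sum_n_le (a : nat -> R) r y N :
  (forall k, Rabs (a k) <= 1) -> Rabs y <= r < 1 ->
  Rabs (PSeries a y - sum_n (fun k => a k * y ^ k) N) <= r ^ S N / (1 - r).
Proof.
  intros Ha Hy.
  assert (Hex : ex_pseries a y) by (apply CV_radius_inside, Rabs_lt_CV_radius; auto; lra).
  rewrite (PSeries_decr_n a N y Hex), sum_n_Reals.
  replace (_ + _ - _) with (y ^ S N * PSeries (PS_decr_n a (S N)) y) by ring.
  rewrite Rabs_mult, <- RPow_abs.
  pose proof (pow_incr (Rabs y) r (S N) ltac:(split; [apply Rabs_pos | lra])).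
  assert (Htail : Rabs (PSeries (PS_decr_n a (S N)) y) <= / (1 - r))
    by (apply Rabs_PSeries_le; auto; intros k; apply Ha).
  pose proof (pow_le (Rabs y) (S N) (Rabs_pos y)).
  pose proof (Rabs_pos (PSeries (PS_decr_n a (S N)) y)).
  unfold Rdiv. apply Rmult_le_compat; lra.
Qed.

Lemma PSeries_hypergeometric_ode (a : nat -> R) (beta gamma x : R) :
  (forall k, PS_derive (PS_derive a) k = (INR k * (INR k - 1) + beta * INR k + gamma) * a k) ->
  Rbar_lt (Rabs x) (CV_radius a) ->
  (1 - x ^ 2) * PSeries (PS_derive (PS_derive a)) x
  = beta * x * PSeries (PS_derive a) x + gamma * PSeries a x.
Proof.
  intros Hrec Hx.
  set (a1 := PS_derive a). set (a2 := PS_derive a1).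
  assert (Hx1 : Rbar_lt (Rabs x) (CV_radius a1)) by (unfold a1; rewrite CV_radius_derive; auto).
  (* coefficientwise, F'' = x^2 F'' + beta x F' + gamma F *)
  assert (Hsplit : forall k, a2 k =
    PS_plus (PS_incr_n a2 2) (PS_plus (PS_scal beta (PS_incr_1 a1)) (PS_scal gamma a)) k).
  { unfold PS_plus, PS_scal, plus, scal; simpl; unfold mult; simpl.
    intros [|[|k]]; unfold a2, a1; rewrite Hrec; unfold PS_derive; cbn -[INR];
      unfold zero; cbn -[INR]; rewrite ?S_INR; simpl INR; ring. }
  assert (Hseries : PSeries a2 x = x ^ 2 * PSeries a2 x + (beta * (x * PSeries a1 x) + gamma * PSeries a x)).
  { rewrite (PSeries_ext _ _ x Hsplit) at 1.
    rewrite !PSeries_plus, !PSeries_scal, PSeries_incr_n, PSeries_incr_1; [reflexivity | ..].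
    - apply ex_pseries_scal; [apply Rmult_comm|]. apply ex_pseries_incr_1, CV_radius_inside; auto.
    - apply ex_pseries_scal; [apply Rmult_comm|]. apply CV_radius_inside; auto.
    - apply ex_pseries_incr_n, ex_pseries_derive; auto.
    - apply ex_pseries_plus; apply ex_pseries_scal; try apply Rmult_comm.
      + apply ex_pseries_incr_1, CV_radius_inside; auto.
      + apply CV_radius_inside; auto. }
  lra.
Qed.

Lemma harmonic_eq_cos (w h : R) (g g1 : R -> R) :
  w <> 0 ->
  (forall t, 0 <= t < h -> is_derive g t (g1 t) /\ is_derive g1 t (- w ^ 2 * g t)) ->
  g 0 = 1 -> g1 0 = 0 ->
  forall t, 0 <= t < h -> g t = cos (w * t).
Proof.
  intros Hw Hg Hg0 Hg10 t Ht.
  (* the energy of g - cos (w t), which solves the same equation, is constant and vanishes at 0 *)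
  set (E := fun s => (g1 s + w * sin (w * s)) ^ 2 + w ^ 2 * (g s - cos (w * s)) ^ 2).
  assert (HdE : forall s, 0 <= s < h -> is_derive E s 0).
  { intros s Hs. destruct (Hg s Hs) as [Hd Hd1]. unfold E. auto_derive.
    - split; [eexists; exact Hd1|]. split; [eexists; exact Hd | auto].
    - replace (Derive (fun x => g x) s) with (g1 s) by (symmetry; apply is_derive_unique, Hd).
      replace (Derive (fun x => g1 x) s) with (- w ^ 2 * g s) by (symmetry; apply is_derive_unique, Hd1).
      ring. }
  destruct (MVT_gen E 0 t (fun _ => 0)) as [c [_ Hc]].
  - intros s Hs. rewrite Rmin_left, Rmax_right in Hs by lra. apply HdE. lra.
  - intros s Hs. rewrite Rmin_left, Rmax_right in Hs by lra.
    apply derivable_continuous_pt, ex_derive_Reals_0. eexists. apply HdE. lra.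
  - assert (HE0 : E 0 = 0) by (unfold E; rewrite Hg0, Hg10, Rmult_0_r, sin_0, cos_0; ring).
    rewrite HE0, Rmult_0_l, Rminus_0_r in Hc. unfold E in Hc.
    assert (Hsq : w ^ 2 * (g t - cos (w * t)) ^ 2 = 0).
    { pose proof (pow2_ge_0 (g1 t + w * sin (w * t))).
      pose proof (Rmult_le_pos _ _ (pow2_ge_0 w) (pow2_ge_0 (g t - cos (w * t)))). lra. }
    apply Rmult_integral in Hsq as [Hw0 | Hdiff].
    + exfalso. exact (pow_nonzero w 2 Hw Hw0).
    + nra.
Qed.

(* [trisect x = 2F1(1/3, 2/3; 1/2; x^2)], as a power series in [x]. *)
Fixpoint trisect_coef (k : nat) : R :=
  match k with
  | O => 1
  | S O => 0
  | S (S m) => trisect_coef m * (INR m + 2/3) * (INR m + 4/3) / ((INR m + 1) * (INR m + 2))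
  end.

Definition trisect (x : R) : R := PSeries trisect_coef x.

Lemma trisect_coef_SS m : trisect_coef (S (S m))
  = trisect_coef m * (INR m + 2/3) * (INR m + 4/3) / ((INR m + 1) * (INR m + 2)).
Proof. reflexivity. Qed.

Lemma trisect_coef_odd n : trisect_coef (S (2 * n)) = 0.
Proof.
  induction n as [|n IH]; [reflexivity|].
  replace (S (2 * S n)) with (S (S (S (2 * n)))) by lia.
  rewrite trisect_coef_SS, IH. unfold Rdiv. ring.
Qed.

Lemma trisect_coef_bounds k : 0 <= trisect_coef k <= 1.
Proof.
  assert (Hpair : forall j, 0 <= trisect_coef j <= 1 /\ 0 <= trisect_coef (S j) <= 1).
  { induction j as [|j [IH IHS]]; [simpl; lra|].
    split; [exact IHS|]. rewrite trisect_coef_SS.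
    pose proof (pos_INR j).
    assert (Hden : 0 < (INR j + 1) * (INR j + 2)) by nra.
    split.
    - apply Rdiv_le_0_compat; [|exact Hden].
      apply Rmult_le_pos; [apply Rmult_le_pos|]; lra.
    - apply (Rdiv_le_1 _ _ Hden).
      apply Rmult_le_compat; try nra. }
  apply Hpair.
Qed.

Lemma Rabs_trisect_coef_le k : Rabs (trisect_coef k) <= 1.
Proof. pose proof (trisect_coef_bounds k). rewrite Rabs_pos_eq; lra. Qed.

Lemma trisect_ode x : Rabs x < 1 ->
  (1 - x ^ 2) * PSeries (PS_derive (PS_derive trisect_coef)) x
  = 3 * x * PSeries (PS_derive trisect_coef) x + 8/9 * trisect x.
Proof.
  intros Hx. apply PSeries_hypergeometric_ode.
  - intros k. unfold PS_derive. rewrite trisect_coef_SS, !S_INR.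
    pose proof (pos_INR k). field. lra.
  - apply Rabs_lt_CV_radius; auto using Rabs_trisect_coef_le.
Qed.

Lemma Rabs_sin_lt_1 t : - (PI / 2) < t < PI / 2 -> Rabs (sin t) < 1.
Proof.
  intros Ht. rewrite <- sin_PI2. apply Rabs_def1.
  - apply sin_increasing_1; lra.
  - rewrite <- sin_neg. apply sin_increasing_1; lra.
Qed.

Lemma trisect_sin_mul_cos t : 0 <= t < PI / 2 -> trisect (sin t) * cos t = cos (t / 3).
Proof.
  intros Ht.
  set (F1 := PSeries (PS_derive trisect_coef)).
  set (F2 := PSeries (PS_derive (PS_derive trisect_coef))).
  assert (Hrad : forall s, 0 <= s < PI / 2 -> Rbar_lt (Rabs (sin s)) (CV_radius trisect_coef)).
  { intros s Hs. apply Rabs_lt_CV_radius; [apply Rabs_trisect_coef_le|].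
    apply Rabs_sin_lt_1. pose proof PI_RGT_0. lra. }
  assert (HdF : forall s, 0 <= s < PI / 2 -> is_derive trisect (sin s) (F1 (sin s)))
    by (intros s Hs; apply is_derive_PSeries, Hrad, Hs).
  assert (HdF1 : forall s, 0 <= s < PI / 2 -> is_derive F1 (sin s) (F2 (sin s)))
    by (intros s Hs; apply is_derive_PSeries; rewrite CV_radius_derive; apply Hrad, Hs).
  replace (t / 3) with (1 / 3 * t) by field.
  apply (harmonic_eq_cos (1 / 3) (PI / 2) (fun s => trisect (sin s) * cos s)
           (fun s => F1 (sin s) * cos s ^ 2 - trisect (sin s) * sin s)); [lra | | | | exact Ht].
  - intros s Hs. specialize (HdF s Hs). specialize (HdF1 s Hs). split.
    + auto_derive; [eexists; exact HdF|].
      replace (Derive (fun x => trisect x) (sin s)) with (F1 (sin s))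
        by (symmetry; apply is_derive_unique, HdF).
      ring.
    + auto_derive; [repeat split; eexists; eassumption|].
      replace (Derive (fun x => trisect x) (sin s)) with (F1 (sin s))
        by (symmetry; apply is_derive_unique, HdF).
      replace (Derive (fun x => F1 x) (sin s)) with (F2 (sin s))
        by (symmetry; apply is_derive_unique, HdF1).
      pose proof (trisect_ode (sin s) ltac:(apply Rabs_sin_lt_1; pose proof PI_RGT_0; lra)) as Hode.
      fold F1 F2 in Hode.
      assert (Hcos2 : cos s ^ 2 = 1 - sin s ^ 2)
        by (pose proof (sin2_cos2 s); unfold Rsqr in *; simpl; lra).
      match goal with |- ?L = ?R => assert (Hdiff : L - R =
        cos s * ((1 - sin s ^ 2) * F2 (sin s) - (3 * sin s * F1 (sin s) + 8/9 * trisect (sin s)))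
        + cos s * F2 (sin s) * (cos s ^ 2 - (1 - sin s ^ 2))) by field end.
      rewrite Hode, Hcos2 in Hdiff. lra.
  - unfold trisect. rewrite sin_0, cos_0, PSeries_0. simpl. ring.
  - unfold F1. rewrite sin_0, cos_0, PSeries_0. unfold PS_derive. simpl. ring.
Qed.

Definition wallis (k : nat) : R := RInt (fun t => sin t ^ k) 0 (PI / 2).

Lemma ex_RInt_sin_pow k a b : ex_RInt (fun t => sin t ^ k) a b.
Proof.
  apply (@ex_RInt_continuous R_CompleteNormedModule). intros t _.
  apply (@ex_derive_continuous R_AbsRing R_NormedModule). auto_derive. auto.
Qed.

Lemma wallis_0 : wallis 0 = PI / 2.
Proof. unfold wallis. simpl. rewrite RInt_const. unfold scal; simpl; unfold mult; simpl. ring. Qed.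

(* integration by parts, as [-cos t * sin t ^ (k+1)] has derivative
   [(k+2) sin t ^ (k+2) - (k+1) sin t ^ k] *)
Lemma wallis_SS k : INR (S (S k)) * wallis (S (S k)) = INR (S k) * wallis k.
Proof.
  set (f := fun t => INR (S (S k)) * sin t ^ S (S k) - INR (S k) * sin t ^ k).
  assert (Hparts : is_RInt f 0 (PI / 2) (minus (- cos (PI / 2) * sin (PI / 2) ^ S k) (- cos 0 * sin 0 ^ S k))).
  { apply (@is_RInt_derive R_CompleteNormedModule (fun t => - cos t * sin t ^ S k)).
    - intros t _. unfold f. auto_derive; auto.
      change (match k with 0%nat => 1 | S _ => INR k + 1 end) with (INR (S k)).
      rewrite !S_INR. cbn [pow]. apply Rminus_diag_uniq.
      match goal with |- ?D = 0 =>
        replace D with ((INR k + 1) * sin t ^ k * (1 - (sin t ^ 2 + cos t ^ 2))) by ring end.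
      rewrite <- (sin2_cos2 t). unfold Rsqr. ring.
    - intros t _. unfold f. apply (@ex_derive_continuous R_AbsRing R_NormedModule). auto_derive. auto. }
  rewrite cos_PI2, sin_0 in Hparts.
  apply (@is_RInt_unique R_CompleteNormedModule) in Hparts.
  unfold f in Hparts.
  rewrite (RInt_minus (fun t => INR (S (S k)) * sin t ^ S (S k)) (fun t => INR (S k) * sin t ^ k))
    in Hparts by (apply (@ex_RInt_scal R_CompleteNormedModule), ex_RInt_sin_pow).
  rewrite !(RInt_scal (fun t => sin t ^ _)) in Hparts by apply ex_RInt_sin_pow.
  unfold wallis. revert Hparts. unfold minus, plus, opp, scal; simpl; unfold mult; simpl. lra.
Qed.

Lemma is_lim_seq_geom_bound (u : nat -> R) (l C q : R) :
  Rabs q < 1 -> (forall n, Rabs (u n - l) <= C * q ^ n) -> is_lim_seq u l.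
Proof.
  intros Hq Hu.
  assert (Hlim : forall s, is_lim_seq (fun n => l + s * (C * q ^ n)) l).
  { intros s. replace (Finite l) with (Finite (l + s * (C * 0))) by (f_equal; ring).
    apply is_lim_seq_plus'; [apply is_lim_seq_const|].
    apply (is_lim_seq_scal_l _ s (C * 0)), (is_lim_seq_scal_l _ C 0), is_lim_seq_geom, Hq. }
  apply (is_lim_seq_le_le (fun n => l + -1 * (C * q ^ n)) u (fun n => l + 1 * (C * q ^ n))).
  - intros n. specialize (Hu n). apply Rabs_le_between in Hu. lra.
  - apply Hlim.
  - apply Hlim.
Qed.

Section TermwiseIntegration.

Variable a : nat -> R.
Hypothesis a_bounded : forall k, Rabs (a k) <= 1.
Variable r : R.
Hypothesis r_range : 0 <= r < 1.

Lemma Rabs_mul_sin_le t : Rabs (r * sin t) <= r.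
Proof.
  rewrite Rabs_mult, (Rabs_pos_eq r) by lra.
  pose proof (Rabs_le (sin t) 1 (SIN_bound t)).
  pose proof (Rabs_pos (sin t)). nra.
Qed.

Lemma continuous_PSeries_mul_sin t : continuous (fun s => PSeries a (r * sin s)) t.
Proof.
  apply (@ex_derive_continuous R_AbsRing R_NormedModule). auto_derive.
  apply ex_derive_PSeries, Rabs_lt_CV_radius; [exact a_bounded|].
  pose proof (Rabs_mul_sin_le t). lra.
Qed.

Lemma is_RInt_sum_n_mul_sin N :
  is_RInt (fun t => sum_n (fun k => a k * (r * sin t) ^ k) N) 0 (PI / 2)
    (sum_n (fun k => a k * r ^ k * wallis k) N).
Proof.
  assert (Hterm : forall k, is_RInt (fun t => a k * (r * sin t) ^ k) 0 (PI / 2) (a k * r ^ k * wallis k)).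
  { intros k.
    pose proof (@is_RInt_scal R_NormedModule _ _ _ (a k * r ^ k) _
                  (@RInt_correct R_CompleteNormedModule _ 0 (PI / 2) (ex_RInt_sin_pow k 0 (PI / 2)))) as H.
    refine (is_RInt_ext _ _ _ _ _ _ H).
    intros t _. rewrite Rpow_mult_distr. unfold scal; simpl; unfold mult; simpl. ring. }
  induction N as [|N IH].
  - rewrite sum_O. refine (is_RInt_ext _ _ _ _ _ _ (Hterm 0%nat)).
    intros t _. rewrite sum_O. reflexivity.
  - rewrite sum_Sn. refine (is_RInt_ext _ _ _ _ _ _ (@is_RInt_plus R_NormedModule _ _ _ _ _ _ IH (Hterm (S N)))).
    intros t _. rewrite sum_Sn. reflexivity.
Qed.

Lemma ex_RInt_PSeries_mul_sin lo hi : ex_RInt (fun t => PSeries a (r * sin t)) lo hi.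
Proof.
  apply (@ex_RInt_continuous R_CompleteNormedModule). intros t _. apply continuous_PSeries_mul_sin.
Qed.

Lemma is_series_RInt_PSeries_mul_sin :
  is_series (fun k => a k * r ^ k * wallis k) (RInt (fun t => PSeries a (r * sin t)) 0 (PI / 2)).
Proof.
  pose proof PI_RGT_0.
  set (partial := fun N t => sum_n (fun k => a k * (r * sin t) ^ k) N).
  enough (Hlim : is_lim_seq (fun N => RInt (partial N) 0 (PI / 2))
                  (RInt (fun t => PSeries a (r * sin t)) 0 (PI / 2))).
  { refine (is_lim_seq_ext _ _ _ _ Hlim).
    intros N. apply (@is_RInt_unique R_CompleteNormedModule), is_RInt_sum_n_mul_sin. }
  apply (is_lim_seq_geom_bound _ _ (PI / 2 * (r / (1 - r))) r); [rewrite Rabs_pos_eq; lra|].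
  intros N.
  assert (Hex : ex_RInt (partial N) 0 (PI / 2)) by (eexists; apply is_RInt_sum_n_mul_sin).
  rewrite Rabs_minus_sym.
  replace (RInt (fun t => PSeries a (r * sin t)) 0 (PI / 2) - RInt (partial N) 0 (PI / 2))
    with (RInt (fun t => PSeries a (r * sin t) - partial N t) 0 (PI / 2))
    by (apply (@RInt_minus R_CompleteNormedModule); [apply ex_RInt_PSeries_mul_sin | exact Hex]).
  eapply Rle_trans.
  - apply (abs_RInt_le_const _ 0 (PI / 2) (r ^ S N / (1 - r))); [lra| |].
    + apply (@ex_RInt_minus R_CompleteNormedModule); [apply ex_RInt_PSeries_mul_sin | exact Hex].
    + intros t _. apply PSeries_sub_sum_n_le; [exact a_bounded|].
      pose proof (Rabs_mul_sin_le t). lra.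
  - simpl pow. right. field. lra.
Qed.

End TermwiseIntegration.

Lemma is_series_even (u : nat -> R) (l : R) :
  (forall n, u (S (2 * n)) = 0) -> is_series u l -> is_series (fun n => u (2 * n)%nat) l.
Proof.
  intros Hodd Hu.
  assert (Hsum : forall n, sum_n u (2 * n) = sum_n (fun m => u (2 * m)%nat) n).
  { induction n as [|n IH]; [reflexivity|].
    replace (2 * S n)%nat with (S (S (2 * n))) by lia.
    rewrite !sum_Sn, IH, Hodd. replace (S (S (2 * n))) with (2 * S n)%nat by lia.
    unfold plus; simpl. ring. }
  unfold is_series. eapply filterlim_ext; [apply Hsum|].
  apply (filterlim_comp _ _ _ (fun n => 2 * n)%nat (sum_n u) eventually eventually); [|exact Hu].
  intros P [N HN]. exists N. intros n Hn. apply HN. lia.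
Qed.

Lemma pochhammer_1 n : pochhammer 1 n = INR (fact n).
Proof.
  induction n as [|n IH]; [reflexivity|].
  simpl pochhammer. rewrite IH, fact_simpl, mult_INR, S_INR. ring.
Qed.

Lemma hyp2F1_term_S a b z n :
  hyp2F1_term a b 1 z (S n) = hyp2F1_term a b 1 z n * ((a + INR n) * (b + INR n) / (INR n + 1) ^ 2) * z.
Proof.
  unfold hyp2F1_term. rewrite !pochhammer_1. simpl pochhammer.
  rewrite fact_simpl, mult_INR, S_INR.
  pose proof (INR_fact_neq_0 n). pose proof (pos_INR n).
  simpl pow. field. lra.
Qed.

Lemma trisect_coef_wallis_even r n :
  trisect_coef (2 * n) * r ^ (2 * n) * wallis (2 * n)
  = PI / 2 * hyp2F1_term (1/3) (2/3) 1 (r ^ 2) n.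
Proof.
  induction n as [|n IH].
  - unfold hyp2F1_term. simpl. rewrite wallis_0. field.
  - replace (2 * S n)%nat with (S (S (2 * n))) by lia.
    rewrite hyp2F1_term_S, <- !Rmult_assoc, <- IH.
    assert (Hw : wallis (S (S (2 * n))) = INR (S (2 * n)) / INR (S (S (2 * n))) * wallis (2 * n)).
    { pose proof (wallis_SS (2 * n)) as Hrec. pose proof (lt_0_INR (S (S (2 * n))) ltac:(lia)).
      apply (Rmult_eq_reg_l (INR (S (S (2 * n))))); [rewrite Hrec; field|]; lra. }
    rewrite trisect_coef_SS, Hw, !S_INR, mult_INR. simpl INR. simpl pow.
    pose proof (pos_INR n). field. lra.
Qed.

Lemma RInt_trisect_mul_sin r : 0 <= r < 1 ->
  RInt (fun t => trisect (r * sin t)) 0 (PI / 2) = PI / 2 * hyp2F1 (1/3) (2/3) 1 (r ^ 2).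
Proof.
  intros Hr.
  pose proof (is_series_RInt_PSeries_mul_sin trisect_coef Rabs_trisect_coef_le r Hr) as Hseries.
  apply is_series_even in Hseries; [|intros n; rewrite trisect_coef_odd; ring].
  apply (is_series_ext _ _ _ (trisect_coef_wallis_even r)), is_series_unique in Hseries.
  unfold hyp2F1. rewrite <- Series_scal_l, Hseries. reflexivity.
Qed.

Lemma sin_ge_third v : 0 <= v <= PI / 2 -> v / 3 <= sin v.
Proof.
  intros Hv. pose proof PI_4. pose proof PI_RGT_0.
  destruct (sin_bound v 0 ltac:(lra) ltac:(lra)) as [Htaylor _].
  unfold sin_approx, sin_term in Htaylor. simpl in Htaylor.
  (* Taylor: v - v^3/6 <= sin v, and v <= 2 *)
  assert (v * v <= 4) by nra.
  nra.
Qed.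

Lemma acos_le_PI2 y : 0 <= y -> acos y <= PI / 2.
Proof.
  intros Hy. destruct (Req_dec y 0) as [-> | Hy0].
  - rewrite acos_0. lra.
  - rewrite acos_atan by lra. pose proof (atan_bound (sqrt (1 - y²) / y)). lra.
Qed.

(* Stdlib's [asin] is [PI / 2] on [[1, +oo)], and [sqrt] vanishes on negatives. *)
Lemma Rabs_asin_sub_PI2_le y : 0 <= y -> Rabs (asin y - PI / 2) <= 3 * sqrt (1 - y²).
Proof.
  intros Hy. destruct (Rlt_le_dec y 1) as [Hy1 | Hy1].
  - rewrite asin_acos by lra.
    pose proof (acos_bound y). pose proof (acos_le_PI2 y Hy).
    rewrite <- sin_acos by lra.
    pose proof (sin_ge_third (acos y) ltac:(lra)).
    rewrite Rabs_left1; lra.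
  - assert (Hasin : asin y = PI / 2).
    { unfold asin. destruct (Rle_dec y (-1)); [lra|]. destruct (Rle_dec 1 y); [reflexivity | lra]. }
    rewrite Hasin, Rminus_diag, Rabs_R0. pose proof (sqrt_pos (1 - y²)). lra.
Qed.

Lemma continuous_asin_1 : continuous asin 1.
Proof.
  assert (Hsqrt : continuous (fun y => sqrt (1 - y²)) 1).
  { apply (continuous_comp (fun y => 1 - y²) sqrt); [|apply continuous_sqrt].
    apply (@ex_derive_continuous R_AbsRing R_NormedModule). auto_derive. auto. }
  apply filterlim_locally. intros eps.
  assert (Heps : 0 < eps / 3) by (pose proof (cond_pos eps); lra).
  assert (Hnear : locally 1 (fun y => Rabs (sqrt (1 - y²)) < eps / 3)).
  { apply (Hsqrt (fun z => Rabs z < eps / 3)).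
    rewrite Rsqr_1, Rminus_diag, sqrt_0. exists (mkposreal _ Heps).
    intros z Hz. change (Rabs (z - 0) < eps / 3) in Hz. rewrite Rminus_0_r in Hz. exact Hz. }
  assert (Hpos : locally 1 (fun y : R => 0 < y)).
  { exists (mkposreal 1 Rlt_0_1). intros y Hy. change (Rabs (y - 1) < 1) in Hy.
    apply Rabs_def2 in Hy. lra. }
  apply (filter_imp (fun y => Rabs (sqrt (1 - y²)) < eps / 3 /\ 0 < y)); [|apply filter_and; auto].
  intros y [Hy Hy0]. change (Rabs (asin y - asin 1) < eps). rewrite asin_1.
  pose proof (Rabs_asin_sub_PI2_le y ltac:(lra)). pose proof (RRle_abs (sqrt (1 - y²))). lra.
Qed.

Definition subst_angle (k psi : R) : R := asin (sin psi / k).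

Definition integrand (alpha psi : R) : R :=
  sqrt 2 * cos (psi / 3) / sqrt (cos (2 * psi) - cos (2 * alpha)).

Lemma is_derive_subst_angle k psi : 0 < k -> Rabs (sin psi) < k ->
  is_derive (subst_angle k) psi (cos psi / sqrt (k ^ 2 - sin psi ^ 2)).
Proof.
  intros Hk Hs. apply Rabs_def2 in Hs.
  assert (Hratio : sin psi / k * k = sin psi) by (field; lra).
  assert (Hy : -1 < sin psi / k < 1) by (split; nra).
  assert (Hpos : 0 < 1 - (sin psi / k)²).
  { unfold Rsqr. assert (-1 < sin psi / k * (sin psi / k) < 1) by nra. lra. }
  assert (Hsqrt : sqrt (k ^ 2 - sin psi ^ 2) = k * sqrt (1 - (sin psi / k)²)).
  { replace (k ^ 2 - sin psi ^ 2) with ((k * k) * (1 - (sin psi / k)²))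
      by (unfold Rsqr; field; lra).
    rewrite sqrt_mult, sqrt_square; nra. }
  assert (Hsq : 0 < sqrt (1 - (sin psi / k)²)) by (apply sqrt_lt_R0, Hpos).
  replace (cos psi / sqrt (k ^ 2 - sin psi ^ 2))
    with (scal (cos psi / k) (1 / sqrt (1 - (sin psi / k)²)))
    by (rewrite Hsqrt; unfold scal; simpl; unfold mult; simpl; field; lra).
  apply (is_derive_comp asin (fun x => sin x / k)).
  - apply is_derive_Reals, (derive_pt_eq_1 _ _ _ (derivable_pt_asin _ Hy)), derive_pt_asin.
  - auto_derive; [lra | field; lra].
Qed.

Lemma continuous_subst_angle_derive k psi : Rabs (sin psi) < k ->
  continuous (fun x => cos x / sqrt (k ^ 2 - sin x ^ 2)) psi.
Proof.
  intros Hs.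
  assert (Hpos : 0 < k ^ 2 - sin psi ^ 2).
  { apply Rabs_def2 in Hs. simpl. nra. }
  apply (@ex_derive_continuous R_AbsRing R_NormedModule). auto_derive.
  split; [exact Hpos|]. split; [|auto]. apply Rgt_not_eq, sqrt_lt_R0, Hpos.
Qed.

Lemma is_RInt_gen_at_point_at_left (f I : R -> R) (a c l : R) :
  a < c -> (forall b, a < b < c -> is_RInt f a b (I b)) ->
  filterlim I (at_left c) (locally l) ->
  is_RInt_gen f (at_point a) (at_left c) l.
Proof.
  intros Hac Hf HI P HP.
  assert (Habove : at_left c (fun b => a < b)).
  { exists (mkposreal (c - a) ltac:(lra)). intros y Hy _.
    change (Rabs (y - c) < c - a) in Hy. apply Rabs_def2 in Hy. lra. }
  assert (Hbelow : at_left c (fun b => b < c)) by (unfold at_left, within; apply filter_forall; auto).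
  apply Filter_prod with (fun x => x = a) (fun b => (a < b /\ b < c) /\ P (I b)).
  - reflexivity.
  - repeat apply filter_and; auto. apply HI, HP.
  - intros x b -> [Hb HPb]. exists (I b). split; [apply Hf, Hb | exact HPb].
Qed.

Lemma sin_nonneg_lt_sin alpha psi : 0 < alpha < PI / 2 -> 0 <= psi < alpha ->
  0 <= sin psi < sin alpha.
Proof.
  intros Ha Hpsi. pose proof PI_RGT_0. split.
  - apply sin_ge_0; lra.
  - apply sin_increasing_1; lra.
Qed.

Lemma sin_pos_lt_1 alpha : 0 < alpha < PI / 2 -> 0 < sin alpha < 1.
Proof.
  intros Ha. pose proof PI_RGT_0. split.
  - apply sin_gt_0; lra.
  - rewrite <- sin_PI2. apply sin_increasing_1; lra.
Qed.

Lemma integrand_subst alpha psi : 0 < alpha < PI / 2 -> 0 <= psi < alpha ->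
  integrand alpha psi = cos psi / sqrt (sin alpha ^ 2 - sin psi ^ 2)
                        * trisect (sin alpha * sin (subst_angle (sin alpha) psi)).
Proof.
  intros Ha Hpsi.
  pose proof (sin_nonneg_lt_sin alpha psi Ha Hpsi) as Hs. pose proof PI_RGT_0.
  set (k := sin alpha) in *.
  unfold integrand, subst_angle.
  assert (Hratio : sin psi / k * k = sin psi) by (field; lra).
  rewrite sin_asin by (split; nra).
  replace (k * (sin psi / k)) with (sin psi) by (field; lra).
  assert (Hcos : 0 < cos psi) by (apply cos_gt_0; lra).
  replace (trisect (sin psi)) with (cos (psi / 3) / cos psi)
    by (rewrite <- (trisect_sin_mul_cos psi) by lra; field; lra).
  replace (cos (2 * psi) - cos (2 * alpha)) with (2 * (k ^ 2 - sin psi ^ 2))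
    by (rewrite !cos_2a_sin; unfold k; ring).
  assert (Hpos : 0 < k ^ 2 - sin psi ^ 2) by (simpl; nra).
  assert (Hsqrt : 0 < sqrt (k ^ 2 - sin psi ^ 2)) by (apply sqrt_lt_R0, Hpos).
  assert (Hsqrt2 : 0 < sqrt 2) by (apply sqrt_lt_R0; lra).
  rewrite sqrt_mult by lra.
  field. lra.
Qed.

Lemma is_RInt_integrand alpha b : 0 < alpha < PI / 2 -> 0 < b < alpha ->
  is_RInt (integrand alpha) 0 b
    (RInt (fun t => trisect (sin alpha * sin t)) 0 (subst_angle (sin alpha) b)).
Proof.
  intros Ha Hb.
  pose proof (sin_pos_lt_1 alpha Ha) as Hk.
  assert (Hs : forall psi, 0 <= psi <= b -> Rabs (sin psi) < sin alpha).
  { intros psi Hpsi. pose proof (sin_nonneg_lt_sin alpha psi Ha ltac:(lra)). rewrite Rabs_pos_eq; lra. }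
  assert (H0 : subst_angle (sin alpha) 0 = 0)
    by (unfold subst_angle; rewrite sin_0; unfold Rdiv; rewrite Rmult_0_l; apply asin_0).
  rewrite <- H0 at 2.
  refine (is_RInt_ext _ _ _ _ _ _
    (@is_RInt_comp R_CompleteNormedModule (fun t => trisect (sin alpha * sin t)) (subst_angle (sin alpha))
       (fun psi => cos psi / sqrt (sin alpha ^ 2 - sin psi ^ 2)) 0 b _ _)).
  - intros psi Hpsi. rewrite Rmin_left, Rmax_right in Hpsi by lra.
    rewrite integrand_subst by lra. reflexivity.
  - intros psi _. apply (continuous_PSeries_mul_sin trisect_coef Rabs_trisect_coef_le). lra.
  - intros psi Hpsi. rewrite Rmin_left, Rmax_right in Hpsi by lra. split.
    + apply is_derive_subst_angle; [lra | apply Hs, Hpsi].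
    + apply continuous_subst_angle_derive, Hs, Hpsi.
Qed.

Lemma continuous_subst_angle alpha : 0 < alpha < PI / 2 ->
  continuous (subst_angle (sin alpha)) alpha.
Proof.
  intros Ha. pose proof (sin_pos_lt_1 alpha Ha).
  apply (continuous_comp (fun psi => sin psi / sin alpha) asin).
  - apply (@ex_derive_continuous R_AbsRing R_NormedModule). auto_derive. lra.
  - replace (sin alpha / sin alpha) with 1 by (field; lra). apply continuous_asin_1.
Qed.

Theorem theorem3 (alpha : R) (Ha : 0 < alpha < PI / 2) :
  is_RInt_gen
    (fun psi => sqrt 2 * cos (psi / 3) / sqrt (cos (2 * psi) - cos (2 * alpha)))
    (at_point 0) (at_left alpha)
    (PI / 2 * hyp2F1 (1/3) (2/3) 1 ((sin alpha) ^ 2)).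
Proof.
  pose proof (sin_pos_lt_1 alpha Ha) as Hk.
  set (F := fun t => trisect (sin alpha * sin t)).
  rewrite <- RInt_trisect_mul_sin by lra. fold F.
  apply (is_RInt_gen_at_point_at_left _ (fun b => RInt F 0 (subst_angle (sin alpha) b)));
    [lra | intros b Hb; apply is_RInt_integrand; auto |].
  apply (filterlim_comp _ _ _ (subst_angle (sin alpha)) (fun u => RInt F 0 u) _ (locally (PI / 2))).
  - replace (PI / 2) with (subst_angle (sin alpha) alpha)
      by (unfold subst_angle; rewrite Rdiv_diag by lra; apply asin_1).
    apply (filterlim_filter_le_1 _ (filter_le_within (F := locally alpha) _)), continuous_subst_angle, Ha.
  - apply (continuous_RInt_1 F 0 (PI / 2)), filter_forall. intros u.
    apply (@RInt_correct R_CompleteNormedModule), ex_RInt_PSeries_mul_sin; [apply Rabs_trisect_coef_le | lra].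
Qed.
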